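(* Let $Z\subseteq\{0,1\}^n$ and let $\bm e_i$ be the $i$-th standard basis vector of $\mathbb R^n$, for some $i\in\{1,\dots,n\}$. Then $$P(\bm e_i)=\{(\bm x,\bm z)\in\mathbb R^n\times\operatorname{conv}(Z):\ |x_i|\le z_i\}.$$
   Context: For $\bm\alpha\in\mathbb R^n$, $P_0(\bm\alpha)=\{(\bm x,\bm z)\in\mathbb R^n\times Z:\ \sum_{j=1}^n|\alpha_jx_j|\le\sqrt{\sum_{j=1}^n\alpha_j^2z_j}\}$ and $P(\bm\alpha)=\operatorname{conv}(P_0(\bm\alpha))$, the convex hull. *)

From mathcomp Require Import all_boot all_order all_algebra.
From mathcomp Require Import classical_sets.
Set Implicit Arguments. Unset Strict Implicit. Unset Printing Implicit Defensive.
Import Order.TTheory GRing.Theory Num.Theory.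
Local Open Scope ring_scope.
Local Open Scope classical_set_scope.

Definition conv (R : numDomainType) (V : lmodType R) (S : set V) : set V :=
  [set v | exists (m : nat) (l : 'I_m -> R) (p : 'I_m -> V),
      (forall k, 0 <= l k) /\ \sum_(k < m) l k = 1 /\
      (forall k, S (p k)) /\ v = \sum_(k < m) l k *: p k].

Definition P0 (R : rcfType) (n : nat) (Z : set 'rV[R]_n) (alpha : 'rV[R]_n)
  : set ('rV[R]_n * 'rV[R]_n) :=
  [set xz : 'rV[R]_n * 'rV[R]_n | Z xz.2 /\
     \sum_(j < n) `|alpha 0 j * xz.1 0 j|
       <= Num.sqrt (\sum_(j < n) alpha 0 j ^+ 2 * xz.2 0 j)].

Definition P (R : rcfType) (n : nat) (Z : set 'rV[R]_n) (alpha : 'rV[R]_n)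
  : set ('rV[R]_n * 'rV[R]_n) := conv (P0 Z alpha).

Definition e_ {R : rcfType} {n : nat} (i : 'I_n) : 'rV[R]_n :=
  \row_(j < n) (if j == i then 1 else 0).

From mathcomp Require Import all_boot all_order all_algebra.
From mathcomp Require Import classical_sets.
Set Implicit Arguments. Unset Strict Implicit. Unset Printing Implicit Defensive.
Import Order.TTheory GRing.Theory Num.Theory.
Local Open Scope ring_scope.
Local Open Scope classical_set_scope.

(* For alpha = e_i the constraint defining P_0 reads |x_i| <= sqrt z_i, i.e.
   |x_i| <= z_i since z_i is 0 or 1; this set is convex in (x, z), which gives
   one inclusion.  Conversely, if z = sum_k l_k p_k with p_k in Z and
   |x_i| <= z_i, then (x, z) = sum_k l_k (c_k x, p_k) with c_k = p_k,i / z_i,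
   and each (c_k x, p_k) lies in P_0(e_i). *)

Lemma fst_sum (U V : nmodType) (I : Type) (r : seq I) (F : I -> U * V) :
  (\sum_(k <- r) F k).1 = \sum_(k <- r) (F k).1.
Proof. exact: (big_morph fst). Qed.

Lemma snd_sum (U V : nmodType) (I : Type) (r : seq I) (F : I -> U * V) :
  (\sum_(k <- r) F k).2 = \sum_(k <- r) (F k).2.
Proof. exact: (big_morph snd). Qed.

Lemma conv_snd (R : numDomainType) (U V : lmodType R) (S : set (U * V))
    (T : set V) xz :
  (forall yz, S yz -> T yz.2) -> conv S xz -> conv T xz.2.
Proof.
move=> ST [m [l [p [l_ge0 [l_sum1 [Sp ->]]]]]].
exists m, l, (fun k => (p k).2); do !split => //; first by move=> k; exact: ST.
by rewrite snd_sum.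
Qed.

Lemma conv_pair_scale (R : numDomainType) (U V : lmodType R) m
    (l c : 'I_m -> R) (x : U) (p : 'I_m -> V) :
  \sum_(k < m) l k * c k = 1 ->
  \sum_(k < m) l k *: (c k *: x, p k) = (x, \sum_(k < m) l k *: p k).
Proof.
move=> lc1; rewrite [LHS]surjective_pairing fst_sum snd_sum /=; congr pair.
under eq_bigr => k _ do rewrite scalerA.
by rewrite -scaler_suml lc1 scale1r.
Qed.

Lemma ler_norm_comb (R : realDomainType) m (l a b : 'I_m -> R) :
  (forall k, 0 <= l k) -> (forall k, `|a k| <= b k) ->
  `|\sum_(k < m) l k * a k| <= \sum_(k < m) l k * b k.
Proof.
move=> l_ge0 ab; apply: (le_trans (ler_norm_sum _ _ _)).
by apply: ler_sum => k _; rewrite normrM ger0_norm // ler_wpM2l.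
Qed.

(* Take c_k = a_k / s; if s = 0 then y = 0 and c = 1 works. *)
Lemma split_weights (R : realFieldType) m (l a : 'I_m -> R) (y : R) :
  \sum_(k < m) l k = 1 -> (forall k, 0 <= a k) ->
  `|y| <= \sum_(k < m) l k * a k ->
  exists c : 'I_m -> R,
    \sum_(k < m) l k * c k = 1 /\ forall k, `|c k * y| <= a k.
Proof.
set s := \sum_(k < m) l k * a k => l_sum1 a_ge0 ys.
have [s0 | s_neq0] := eqVneq s 0.
  exists (fun=> 1); split; first by under eq_bigr do rewrite mulr1.
  by move=> k; rewrite mul1r (le_trans ys) // s0.
have s_gt0 : 0 < s by rewrite lt_def s_neq0 (le_trans _ ys).
exists (fun k => a k / s); split.
  by under eq_bigr do rewrite mulrA; rewrite -mulr_suml divff.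
move=> k; rewrite normrM ger0_norm ?divr_ge0 ?(ltW s_gt0) //.
by rewrite mulrAC ler_pdivrMr // ler_wpM2l.
Qed.

Section UnitVector.
Variables (R : rcfType) (n : nat) (i : 'I_n).

Lemma sum_e_ (F : R -> 'I_n -> R) :
  (forall j, F 0 j = 0) -> \sum_(j < n) F (e_ i 0 j) j = F 1 i.
Proof.
move=> F0; rewrite (bigD1 i) //= big1 ?addr0; first by rewrite mxE eqxx.
by move=> j /negbTE ji; rewrite mxE ji F0.
Qed.

Variables (Z : set 'rV[R]_n)
  (hZ : forall z, Z z -> forall j : 'I_n, z 0 j = 0 \/ z 0 j = 1).

Lemma P0_e_ xz : P0 Z (e_ i) xz <-> Z xz.2 /\ `|xz.1 0 i| <= xz.2 0 i.
Proof.
rewrite /P0 /= (sum_e_ (F := fun e j => `|e * xz.1 0 j|)) => [|j]; last first.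
  by rewrite mul0r normr0.
rewrite (sum_e_ (F := fun e j => e ^+ 2 * xz.2 0 j)) => [|j]; last first.
  by rewrite expr0n mul0r.
rewrite mul1r expr1n mul1r.
by split=> -[Zz h]; split=> //; case: (hZ Zz i) h => ->; rewrite ?sqrtr0 ?sqrtr1.
Qed.

Lemma P_e_sub :
  P Z (e_ i) `<=` [set xz : 'rV[R]_n * 'rV[R]_n | conv Z xz.2 /\ `|xz.1 0 i| <= xz.2 0 i].
Proof.
move=> xz Pxz; split; first by apply: conv_snd Pxz => yz /P0_e_ [].
case: Pxz => m [l [p [l_ge0 [_ [P0p ->]]]]].
rewrite fst_sum snd_sum !summxE.
under eq_bigr do rewrite !mxE; under [X in _ <= X]eq_bigr do rewrite !mxE.
by apply: ler_norm_comb => // k; case: (P0_e_ (p k)).1.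
Qed.

Lemma sub_P_e :
  [set xz : 'rV[R]_n * 'rV[R]_n | conv Z xz.2 /\ `|xz.1 0 i| <= xz.2 0 i] `<=` P Z (e_ i).
Proof.
move=> [x z] /= [[m [l [p [l_ge0 [l_sum1 [Zp ->]]]]]]].
rewrite summxE; under eq_bigr do rewrite mxE.
have p_ge0 k : 0 <= p k 0 i by case: (hZ (Zp k) i) => ->.
case/(split_weights l_sum1 p_ge0) => c [lc1 cx].
exists m, l, (fun k => (c k *: x, p k)); split=> //; split=> //; split.
  by move=> k; apply/P0_e_; split; [exact: Zp | rewrite /= mxE].
by rewrite conv_pair_scale.
Qed.

End UnitVector.

Theorem mainTheorem6 (R : rcfType) (n : nat) (Z : set 'rV[R]_n)
  (hZ : forall z, Z z -> forall j : 'I_n, z 0 j = 0 \/ z 0 j = 1)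
  (i : 'I_n) :
  P Z (@e_ R n i) = [set xz : 'rV[R]_n * 'rV[R]_n | conv Z xz.2 /\ `|xz.1 0 i| <= xz.2 0 i].
Proof. by apply/seteqP; split; [exact: P_e_sub | exact: sub_P_e]. Qed.
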